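(* Let $\epsilon>0$ and let $\theta\in\Theta_1\cap\mathbb{V}$ be locally optimal, i.e. $\theta=\operatorname{argsup}_{v\in\Theta\cap\mathbb{V}_{D(\theta)}}L(v)$. If $\sup_{\tau\ge0}DL(\theta,V_\tau)<\epsilon$, then \[L(\hat\theta)-L(\theta)\le\hat\theta'(x_n)\,\epsilon<\beta\epsilon.\]
   Context: Let $f$ be a probability density on $\mathbb{R}_{\ge0}$ satisfying the standing assumptions: (A1) $f$ is continuous and $f(x)>0$ for all $x>0$; (A2) there is $\beta\in\mathbb{R}$ such that for every $\lambda\in\mathbb{R}$, $\int_0^\infty e^{\lambda x}f(x)\,dx<\infty$ if and only if $\lambda<\beta$, and $\lim_{\lambda\to\beta^-}\int_0^\infty e^{\lambda x}f(x)\,dx=\infty$; (A3) for every $\lambda\in\mathbb{R}$, $\int_0^\infty e^{\lambda x}f(x)dx<\infty$ implies $\int_0^\infty x^2e^{\lambda x}f(x)dx<\infty$. Let $M$ be the measure on $\mathbb{R}_{\ge0}$ with density $f$. Fix data $x_1\le\dots\le x_n$ in $\mathbb{R}_{\ge0}$ with empirical distribution $\hat P=\frac1n\sum_{i=1}^n\delta_{x_i}$. $\Theta$ is the set of convex non-decreasing functions $\theta:\mathbb{R}_{\ge0}\to\mathbb{R}$, and $\Theta_1=\{\theta\in\Theta:\int e^{\theta}dM=1\}$. For $\theta\in\Theta$, $L(\theta):=\int\theta\,d\hat P-\int e^{\theta}\,dM+1\in[-\infty,\infty)$. For $\theta\in\Theta$ and a function $v$, $DL(\theta,v):=\lim_{t\to0^+}\frac{L(\theta+tv)-L(\theta)}{t}$.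 $\mathbb{V}$ is the set of continuous piecewise linear functions $v:\mathbb{R}_{\ge0}\to\mathbb{R}$ with finitely many breakpoints; $D(v)=\{\tau\ge0: v'(\tau-)\neq v'(\tau+)\}$ is its set of breakpoints; for finite $S\subset\mathbb{R}_{\ge0}$, $\mathbb{V}_S=\{v\in\mathbb{V}:D(v)\subseteq S\}$. For $\tau\ge0$, $V_\tau(x):=(x-\tau)^+$. It is known (Dümbgen) that $L$ has a unique maximizer $\hat\theta$ over $\Theta$; it belongs to $\Theta_1\cap\mathbb{V}$ and its breakpoints lie in $(\{0\}\cup[x_1,x_n])\setminus\{x_1,\dots,x_n\}$, so in particular $\hat\theta$ is differentiable at $x_n$. *)

From HB Require Import structures.
From mathcomp Require Import all_boot all_order all_algebra.
From mathcomp Require Import all_classical all_reals all_analysis.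
Set Implicit Arguments. Unset Strict Implicit. Unset Printing Implicit Defensive.
Import Order.TTheory GRing.Theory Num.Theory.
Import numFieldNormedType.Exports.
Local Open Scope classical_set_scope.
Local Open Scope ring_scope.

Section Defs.
Variable R : realType.
Local Notation mu := (@lebesgue_measure R).

Definition Rplus : set R := `[0, +oo[%classic.

(* integral against M (density f) of a nonnegative function g, on [0,oo) *)
Definition intM (f g : R -> R) : \bar R :=
  (\int[mu]_(x in Rplus) (g x * f x)%:E)%E.

Definition finM (f g : R -> R) : Prop := (intM f g < +oo)%E.

(* Standing assumptions (A1)-(A3) on f, plus f being a probability density. *)
Definition density_assumptions (f : R -> R) (beta : R) : Prop :=
  {within Rplus, continuous f} /\
  (forall x, 0 < x -> 0 < f x) /\
  intM f (fun _ => 1) = 1%:E /\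
  (forall l : R, finM f (fun x => expR (l * x)) <-> l < beta) /\
  ((fun l => intM f (fun x => expR (l * x))) @ beta^'- --> +oo%E) /\
  (forall l : R, finM f (fun x => expR (l * x)) ->
                 finM f (fun x => x ^+ 2 * expR (l * x))).

Definition inTheta (th : R -> R) : Prop :=
  (forall x y, 0 <= x -> x <= y -> th x <= th y) /\
  (forall x y (l : R), 0 <= x -> 0 <= y -> 0 <= l -> l <= 1 ->
     th (l * x + (1 - l) * y) <= l * th x + (1 - l) * th y).

Definition inTheta1 (f th : R -> R) : Prop :=
  inTheta th /\ intM f (fun x => expR (th x)) = 1%:E.

Definition Lik (f : R -> R) (xs : seq R) (th : R -> R) : \bar R :=
  ((((\sum_(x <- xs) th x) / (size xs)%:R)%R)%:E
     - intM f (fun x => expR (th x)) + 1)%E.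

Definition DL (f : R -> R) (xs : seq R) (th v : R -> R) : \bar R :=
  lim ((fun t : R => ((Lik f xs (fun x => (th x + t * v x)%R) - Lik f xs th)
                        * (t^-1)%R%:E)%E) @ 0^'+).

Definition rderiv (v : R -> R) (x : R) : R :=
  lim ((fun h : R => (v (x + h) - v x) / h) @ 0^'+).
(* left derivative; on R_{>=0} we use the convention v'(0-) = 0
   (functions are thought of as extended by a constant to the left of 0,
    so that e.g. V_0(x) = x has a breakpoint at 0). *)
Definition lderiv (v : R -> R) (x : R) : R :=
  if x == 0 then 0 else lim ((fun h : R => (v x - v (x - h)) / h) @ 0^'+).

(* V: continuous piecewise linear functions on R_{>=0} with finitely many
   breakpoints: there is a finite list s of points such that v is affine on
   every interval [a,b] of R_{>=0} whose interior avoids s. *)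
Definition inV (v : R -> R) : Prop :=
  {within Rplus, continuous v} /\
  exists s : seq R, forall a b, 0 <= a -> a < b ->
    (forall t, t \in s -> ~ (a < t < b)) ->
    forall x, a <= x -> x <= b ->
      v x = v a + (x - a) / (b - a) * (v b - v a).

Definition Dbr (v : R -> R) : set R :=
  [set tau | 0 <= tau /\ lderiv v tau != rderiv v tau].

Definition inVS (S : set R) (v : R -> R) : Prop := inV v /\ Dbr v `<=` S.

Definition Vtau (tau : R) : R -> R := fun x => Num.max (x - tau) 0.

Definition locally_optimal (f : R -> R) (xs : seq R) (th : R -> R) : Prop :=
  inTheta th /\ inVS (Dbr th) th /\
  forall v, inTheta v -> inVS (Dbr th) v -> (Lik f xs v <= Lik f xs th)%E.

End Defs.

From HB Require Import structures.
From mathcomp Require Import all_boot all_order all_algebra.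
From mathcomp Require Import all_classical all_reals all_analysis.
From mathcomp Require Import measurable_realfun ring lra.
Import Order.TTheory GRing.Theory Num.Theory.
Import numFieldNormedType.Exports.
Local Open Scope classical_set_scope.
Local Open Scope ring_scope.

Set Implicit Arguments. Unset Strict Implicit. Unset Printing Implicit Defensive.

(* Convexity and piecewise linearity give thhat = thhat(0) + sum_q J_q V_q with
   jumps J_q >= 0 at its kinks q; as the kinks lie in [0, x_n], thhat'(x_n) is
   the total jump sum_q J_q, which is also the slope of thhat at infinity and
   hence < beta since int e^thhat dM is finite.  Both theta and thhat lie in
   Theta_1, so L(thhat) - L(theta) = int (thhat - theta) dP_hat.  Three
   first-order facts bound this by eps * sum_q J_q:
   - DL(theta, V_q) = int V_q dP_hat - int V_q e^theta dM < eps;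
   - shrinking theta towards theta(0) is admissible, so local optimality gives
     int (theta - theta(0)) e^theta dM <= int (theta - theta(0)) dP_hat;
   - e^y >= 1 + y gives int (thhat - theta) e^theta dM <= 0 (Gibbs). *)

Section PiecewiseLinear.
Variable R : realType.
Implicit Types (v w : R -> R) (s : seq R) (a b c d p q x : R).

Definition affine_on a b v := forall x, a <= x -> x <= b ->
  v x = v a + (x - a) / (b - a) * (v b - v a).

Definition pwlinear s v := forall a b, 0 <= a -> a < b ->
  (forall t, t \in s -> ~ (a < t < b)) -> affine_on a b v.

Definition jump v q := rderiv v q - lderiv v q.

Lemma inV_pwlinear v : inV v -> exists s, pwlinear s v.
Proof. by case. Qed.

Lemma lderiv0 v : lderiv v 0 = 0.
Proof. by rewrite /lderiv eqxx. Qed.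

Lemma rderiv_eq_slope v x d c : 0 < d ->
  (forall h, 0 < h -> h <= d -> v (x + h) = v x + h * c) -> rderiv v x = c.
Proof.
move=> d_gt0 vE; apply: cvg_lim => //; apply: cvg_near_cst; near=> h.
have h_gt0 : 0 < h by near: h; exact: nbhs_right_gt.
rewrite vE; first by rewrite addrAC subrr add0r mulrC mulKf ?gt_eqF.
- exact: h_gt0.
- by near: h; exact: nbhs_right_le.
Unshelve. all: end_near. Qed.

Lemma lderiv_eq_slope v x d c : x != 0 -> 0 < d ->
  (forall h, 0 < h -> h <= d -> v (x - h) = v x - h * c) -> lderiv v x = c.
Proof.
move=> x_neq0 d_gt0 vE; rewrite /lderiv (negbTE x_neq0).
apply: cvg_lim => //; apply: cvg_near_cst; near=> h.
have h_gt0 : 0 < h by near: h; exact: nbhs_right_gt.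
rewrite vE; first by rewrite opprB addrC subrK mulrC mulKf ?gt_eqF.
- exact: h_gt0.
- by near: h; exact: nbhs_right_le.
Unshelve. all: end_near. Qed.

Lemma rderiv_affine_on v x d : 0 < d -> affine_on x (x + d) v ->
  rderiv v x = (v (x + d) - v x) / d.
Proof.
move=> d_gt0 vA; apply: (rderiv_eq_slope d_gt0) => h h_gt0 h_le.
rewrite vA; [|lra|lra]; rewrite !(addrC x) addrK; field; exact: lt0r_neq0.
Qed.

Lemma lderiv_affine_on v x d : x != 0 -> 0 < d -> affine_on (x - d) x v ->
  lderiv v x = (v x - v (x - d)) / d.
Proof.
move=> x_neq0 d_gt0 vA; apply: (lderiv_eq_slope x_neq0 d_gt0) => h h_gt0 h_le.
rewrite vA; [|lra|lra].
have -> : x - h - (x - d) = d - h by ring.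
have -> : x - (x - d) = d by ring.
field; exact: lt0r_neq0.
Qed.

Lemma affine_on_lin a b v w c : affine_on a b v -> affine_on a b w ->
  affine_on a b (fun y => v y - c * w y).
Proof. by move=> vA wA y ay yb; rewrite (vA y ay yb) (wA y ay yb); ring. Qed.

(* The bound [d <= x] keeps the left neighbourhood of [x] inside [R_{>=0}]. *)
Lemma isolating_radius s x : 0 <= x -> exists d, [/\ 0 < d, (0 < x -> d <= x) &
  forall t, t \in s -> t != x -> t <= x - d \/ x + d <= t].
Proof.
move=> x_ge0; elim: s => [|t s [d [d_gt0 dx ds]]].
  exists (if 0 < x then x else 1); split; first by case: ifP => //; lra.
    by move=> ->.
  by move=> t; rewrite in_nil.
case: (eqVneq t x) => [->|tx].
  by exists d; split => // t'; rewrite in_cons => /orP[/eqP ->|/ds //]; rewrite eqxx.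
have e_gt0 : 0 < `|t - x| by rewrite normr_gt0 subr_eq0.
pose m := Num.min d `|t - x|.
have le_d : m <= d by rewrite ge_min lexx.
have le_e : m <= `|t - x| by rewrite ge_min lexx orbT.
have m_gt0 : 0 < m by rewrite lt_min d_gt0 e_gt0.
clearbody m; exists m; split => //.
- by move=> /dx; lra.
move=> t'; rewrite in_cons => /orP[/eqP -> _|/ds h /h []]; last 2 first.
- by left; lra.
- by right; lra.
by case: (ler0P (t - x)) le_e => tx0 me; [left|right]; lra.
Qed.

Lemma pwlinear_affine_near s v x d : pwlinear s v -> 0 <= x -> 0 < d ->
  (0 < x -> d <= x) -> (forall t, t \in s -> t != x -> t <= x - d \/ x + d <= t) ->
  affine_on x (x + d) v /\ (0 < x -> affine_on (x - d) x v).
Proof.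
move=> vL x_ge0 d_gt0 dx ds; split => [|x_gt0].
  apply: vL => //; first lra.
  move=> t ts; case: (eqVneq t x) => [->|tx]; first lra.
  by case: (ds t ts tx); lra.
have dx' := dx x_gt0; apply: vL; [lra|lra|].
move=> t ts; case: (eqVneq t x) => [->|tx]; first lra.
by case: (ds t ts tx); lra.
Qed.

Lemma Vtau_le p y : y <= p -> Vtau p y = 0.
Proof. by move=> yp; rewrite /Vtau max_r // subr_le0. Qed.

Lemma Vtau_ge p y : p <= y -> Vtau p y = y - p.
Proof. by move=> py; rewrite /Vtau max_l // subr_ge0. Qed.

Lemma Vtau_ge0 p y : 0 <= Vtau p y.
Proof. by rewrite /Vtau le_max lexx orbT. Qed.

Lemma Vtau_le_id p y : 0 <= p -> 0 <= y -> Vtau p y <= y.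
Proof. by move=> p_ge0 y_ge0; rewrite /Vtau ge_max y_ge0 andbT; lra. Qed.

Lemma Vtau_ge_sub p y : y - p <= Vtau p y.
Proof. by rewrite /Vtau le_max lexx. Qed.

Lemma affine_on_Vtau p a b : a < b -> p <= a \/ b <= p -> affine_on a b (Vtau p).
Proof.
move=> ab [pa|bp] y ay yb.
  rewrite !Vtau_ge; [|lra|lra|lra].
  by rewrite (_ : b - p - (a - p) = b - a) ?divfK ?subr_eq0 ?gt_eqF //; ring.
by rewrite !Vtau_le ?subrr ?mulr0 ?addr0 //; lra.
Qed.

Lemma jump_sub_Vtau s v p c q : 0 <= p -> pwlinear (p :: s) v -> 0 <= q -> q != p ->
  jump (fun y => v y - c * Vtau p y) q = jump v q.
Proof.
move=> p_ge0 vL q_ge0 qp.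
have [d [d_gt0 dq ds]] := isolating_radius (p :: s) q_ge0.
have [vR vL'] := pwlinear_affine_near vL q_ge0 d_gt0 dq ds.
have pd : p <= q - d \/ q + d <= p by apply: ds; rewrite ?mem_head // eq_sym.
have VR : affine_on q (q + d) (Vtau p).
  by apply: affine_on_Vtau; [lra|case: pd => ?; [left|right]; lra].
rewrite /jump !(rderiv_affine_on d_gt0) //; last exact: affine_on_lin.
have [q0|q_neq0] := eqVneq q 0.
  rewrite q0 !lderiv0 in pd *; rewrite !Vtau_le; [|lra|lra].
  by rewrite !mulr0 !subr0.
have q_gt0 : 0 < q by rewrite lt_def q_neq0.
have VL : affine_on (q - d) q (Vtau p).
  by apply: affine_on_Vtau; [lra|case: pd => ?; [left|right]; lra].
have vL'' := vL' q_gt0.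
rewrite !(lderiv_affine_on q_neq0 d_gt0) //; last exact: affine_on_lin.
have d_neq0 : d != 0 by exact: lt0r_neq0.
by case: pd => pd; [rewrite !Vtau_ge | rewrite !Vtau_le]; try lra; field.
Qed.

Lemma pwlinear_sub_Vtau s v p : 0 < p -> pwlinear (p :: s) v ->
  pwlinear s (fun y => v y - jump v p * Vtau p y).
Proof.
move=> p_gt0 vL a b a_ge0 ab sab.
have [/andP[ap pb]|pab] := boolP (a < p < b); last first.
  apply: affine_on_lin.
    by apply: vL => // t; rewrite in_cons => /orP[/eqP->|/sab //]; apply/negP.
  apply: affine_on_Vtau => //.
  by move: pab; rewrite negb_and -!leNgt => /orP[]; [left|right].
have vA1 : affine_on a p v.
  apply: vL => // t; rewrite in_cons => /orP[/eqP->|ts]; first lra.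
  by move=> ?; apply: (sab t ts); lra.
have vA2 : affine_on p b v.
  apply: vL => //; first lra.
  move=> t; rewrite in_cons => /orP[/eqP->|ts]; first lra.
  by move=> ?; apply: (sab t ts); lra.
have pa : p - a != 0 by rewrite subr_eq0 gt_eqF.
have bp : b - p != 0 by rewrite subr_eq0 gt_eqF.
have vlp : lderiv v p = (v p - v a) / (p - a).
  rewrite (lderiv_affine_on (d := p - a)) ?lt0r_neq0 ?subr_gt0 //;
    by rewrite (_ : p - (p - a) = a) //; ring.
have vrp : rderiv v p = (v b - v p) / (b - p).
  rewrite (rderiv_affine_on (d := b - p)) ?subr_gt0 //;
    by rewrite (_ : p + (b - p) = b) //; ring.
have wE y : a <= y -> y <= b ->
    v y - jump v p * Vtau p y = v p + (y - p) * ((v p - v a) / (p - a)).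
  move=> ay yb; rewrite /jump vlp vrp.
  have [yp|py] := lerP y p.
    by rewrite Vtau_le // mulr0 subr0 (vA1 y ay yp); field; rewrite ?pa ?bp.
  by rewrite Vtau_ge ?(ltW py) // (vA2 y (ltW py) yb); field; rewrite pa bp.
have ba : b - a != 0 by rewrite subr_eq0 gt_eqF.
by move=> y ay yb; rewrite !wE //; [field; rewrite ?pa ?ba|lra|lra].
Qed.

Lemma pwlinear_decomposition s v : uniq s -> {in s, forall q, 0 < q} -> pwlinear s v ->
  forall x, 0 <= x -> v x = v 0 + \sum_(q <- 0 :: s) jump v q * Vtau q x.
Proof.
elim: s v => [|p s IH] v.
  move=> _ _ vL x x_ge0; rewrite big_seq1 /jump lderiv0 subr0.
  have [->|x_neq0] := eqVneq x 0; first by rewrite Vtau_le // mulr0 addr0.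
  have x_gt0 : 0 < x by rewrite lt_def x_neq0.
  have vA : affine_on 0 (0 + x) v by rewrite add0r; apply: vL => // t; rewrite in_nil.
  rewrite (rderiv_affine_on x_gt0 vA) add0r Vtau_ge // subr0 divfK ?gt_eqF //; ring.
rewrite cons_uniq => /andP[ps s_uniq] s_gt0 vL x x_ge0.
have p_gt0 := s_gt0 p (mem_head _ _).
pose w y := v y - jump v p * Vtau p y.
have jump_w q : q \in 0 :: s -> jump w q = jump v q.
  rewrite in_cons => /orP[/eqP->|qs]; apply: (jump_sub_Vtau (s := s)) => //;
    try exact: ltW.
  - by rewrite (lt_eqF p_gt0).
  - exact/ltW/s_gt0/mem_behead.
  - by apply: contraNneq ps => <-.
have s_gt0' : {in s, forall q, 0 < q} by move=> q qs; apply: s_gt0; rewrite inE qs orbT.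
have := IH w s_uniq s_gt0' (pwlinear_sub_Vtau p_gt0 vL) x x_ge0.
under eq_big_seq => q /jump_w -> do [].
have w0 : w 0 = v 0 by rewrite /w Vtau_le ?mulr0 ?subr0 // ltW.
rewrite w0 /w !big_cons; lra.
Qed.

Lemma jump_ge0 s v q : inTheta v -> pwlinear s v -> 0 <= q -> 0 <= jump v q.
Proof.
move=> [v_mono v_cvx] vL q_ge0.
have [d [d_gt0 dq ds]] := isolating_radius s q_ge0.
have [vR vL'] := pwlinear_affine_near vL q_ge0 d_gt0 dq ds.
rewrite /jump (rderiv_affine_on d_gt0 vR).
have [->|q_neq0] := eqVneq q 0.
  by rewrite lderiv0 subr0 divr_ge0 ?subr_ge0 ?(ltW d_gt0) // v_mono //; lra.
have q_gt0 : 0 < q by rewrite lt_def q_neq0.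
rewrite (lderiv_affine_on q_neq0 d_gt0 (vL' q_gt0)) subr_ge0 ler_pM2r ?invr_gt0 //.
have dq' := dq q_gt0.
have : v q <= 1 / 2 * v (q - d) + (1 - 1 / 2) * v (q + d).
  have := v_cvx (q - d) (q + d) (1 / 2).
  by rewrite (_ : 1 / 2 * (q - d) + (1 - 1 / 2) * (q + d) = q); [apply; lra|field].
lra.
Qed.

Lemma pwlinear_pos_undup s v : pwlinear s v -> pwlinear [seq t <- undup s | 0 < t] v.
Proof.
move=> vL a b a_ge0 ab sab; apply: vL => // t ts abt; apply: (sab t) => //.
by rewrite mem_filter mem_undup ts andbT; case/andP: abt; lra.
Qed.

Lemma Theta_V_decomposition v : inTheta v -> inV v -> exists Q : seq R,
  [/\ {in Q, forall q, 0 <= q}, {in Q, forall q, 0 <= jump v q} &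
      forall x, 0 <= x -> v x = v 0 + \sum_(q <- Q) jump v q * Vtau q x].
Proof.
move=> vT /inV_pwlinear [s /pwlinear_pos_undup vL].
have Q_ge0 : {in 0 :: [seq t <- undup s | 0 < t], forall q, 0 <= q}.
  by move=> q; rewrite inE mem_filter => /orP[/eqP->//|/andP[/ltW]].
exists (0 :: [seq t <- undup s | 0 < t]); split => //.
- by move=> q /Q_ge0; exact: jump_ge0 vT vL.
- apply: pwlinear_decomposition vL; first by rewrite filter_uniq ?undup_uniq.
  by move=> q; rewrite mem_filter => /andP[].
Qed.

Lemma rderiv_Vtau_sum v Q (c : R -> R) a x : 0 <= x ->
  (forall y, 0 <= y -> v y = a + \sum_(q <- Q) c q * Vtau q y) ->
  rderiv v x = \sum_(q <- Q | q <= x) c q.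
Proof.
move=> x_ge0 vE; have [d [d_gt0 _ dQ]] := isolating_radius Q x_ge0.
apply: (rderiv_eq_slope d_gt0) => h h_gt0 h_le.
rewrite !vE; [|lra|lra]; rewrite -addrA; congr (_ + _).
rewrite mulr_sumr [X in _ = _ + X]big_mkcond -big_split /=.
apply: eq_big_seq => q qQ.
have [qx|xq] := lerP q x; first by rewrite !Vtau_ge; [ring|lra|lra].
have [|xdq] := dQ q qQ (negbT (gt_eqF xq)); first lra.
by rewrite !Vtau_le; [ring|lra|lra].
Qed.

Lemma rderiv_eq_sum_jump v Q x : 0 <= x ->
  (forall y, 0 <= y -> v y = v 0 + \sum_(q <- Q) jump v q * Vtau q y) ->
  (forall q, x < q -> ~ Dbr v q) -> rderiv v x = \sum_(q <- Q) jump v q.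
Proof.
move=> x_ge0 vE smooth; rewrite (rderiv_Vtau_sum x_ge0 vE) big_mkcond /=.
apply: eq_bigr => q _; case: leP => // xq; apply/esym/eqP; rewrite subr_eq0.
by apply: contraT => kink; case: (smooth q xq); split; [lra|rewrite eq_sym].
Qed.

Lemma Vtau_sum_le Q (c : R -> R) x : {in Q, forall q, 0 <= q} ->
  {in Q, forall q, 0 <= c q} -> 0 <= x ->
  \sum_(q <- Q) c q * Vtau q x <= (\sum_(q <- Q) c q) * x.
Proof.
move=> Q_ge0 c_ge0 x_ge0; rewrite mulr_suml big_seq [leRHS]big_seq.
apply: ler_sum => q qQ.
by apply: ler_wpM2l; [exact: c_ge0|exact: Vtau_le_id (Q_ge0 q qQ) x_ge0].
Qed.

Lemma Vtau_sum_ge Q (c : R -> R) x : {in Q, forall q, 0 <= c q} ->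
  (\sum_(q <- Q) c q) * x - \sum_(q <- Q) c q * q <= \sum_(q <- Q) c q * Vtau q x.
Proof.
move=> c_ge0; rewrite mulr_suml -sumrB big_seq [leRHS]big_seq.
by apply: ler_sum => q qQ; rewrite -mulrBr ler_wpM2l ?c_ge0 // Vtau_ge_sub.
Qed.

End PiecewiseLinear.

Section IntegralM.
Variable R : realType.
Local Notation mu := (@lebesgue_measure R).
Implicit Types (f g h v : R -> R).

Definition measRp g := measurable_fun (@Rplus R) g.

Lemma RplusE (x : R) : Rplus x = (0 <= x).
Proof. by rewrite /Rplus /= in_itv /= andbT. Qed.

Lemma measurable_Rplus : measurable (@Rplus R).
Proof. exact: measurable_itv. Qed.

Lemma continuous_measRp g : {within @Rplus R, continuous g} -> measRp g.
Proof. exact: subspace_continuous_measurable_fun measurable_Rplus. Qed.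

Lemma inV_measRp v : inV v -> measRp v.
Proof. by case=> v_cont _; exact: continuous_measRp. Qed.

Lemma measRp_cst (c : R) : measRp (fun _ => c).
Proof. exact: measurable_cst. Qed.

Lemma measRp_id : measRp id.
Proof. exact: measurable_id. Qed.

Lemma measRpD g h : measRp g -> measRp h -> measRp (fun x => g x + h x).
Proof. exact: measurable_funD. Qed.

Lemma measRpB g h : measRp g -> measRp h -> measRp (fun x => g x - h x).
Proof. exact: measurable_funB. Qed.

Lemma measRpM g h : measRp g -> measRp h -> measRp (fun x => g x * h x).
Proof. exact: measurable_funM. Qed.

Lemma measRpX g n : measRp g -> measRp (fun x => g x ^+ n).
Proof. exact: measurable_funX. Qed.

Lemma measRp_exp g : measRp g -> measRp (fun x => expR (g x)).
Proof. by move=> g_meas; exact: (measurableT_comp (@measurable_expR R) g_meas). Qed.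

Lemma measRp_Vtau p : measRp (Vtau p).
Proof.
apply: measurable_maxr; last exact: measRp_cst.
exact: measRpB measRp_id (measRp_cst p).
Qed.

Lemma measRp_sum (I : Type) (s : seq I) (F : I -> R -> R) :
  (forall i, measRp (F i)) -> measRp (fun x => \sum_(i <- s) F i x).
Proof.
move=> F_meas; elim: s => [|i s IH].
  by under eq_fun do rewrite big_nil; exact: measRp_cst.
by under eq_fun do rewrite big_cons; exact: measRpD.
Qed.

Lemma intM_EFin f g : (0 <= intM f g)%E -> finM f g -> intM f g = (fine (intM f g))%:E.
Proof. by rewrite /finM; case: (intM f g). Qed.

Variable f : R -> R.
Hypotheses (f_meas : measRp f) (f_ge0 : forall x, 0 <= x -> 0 <= f x).

Lemma eq_intM g h : (forall x, 0 <= x -> g x = h x) -> intM f g = intM f h.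
Proof. by move=> gh; apply: eq_integral => x; rewrite inE RplusE => /gh ->. Qed.

Lemma intM_ge0 g : (forall x, 0 <= x -> 0 <= g x) -> (0 <= intM f g)%E.
Proof.
move=> g_ge0; apply: integral_ge0 => x.
by rewrite RplusE lee_fin => x_ge0; rewrite mulr_ge0 ?g_ge0 ?f_ge0.
Qed.

Lemma measRp_EFin_f g : measRp g -> measurable_fun (@Rplus R) (EFin \o (fun x => g x * f x)).
Proof. by move=> g_meas; apply/measurable_EFinP; exact: measRpM. Qed.

Lemma le_intM g h : measRp g -> measRp h -> (forall x, 0 <= x -> 0 <= g x) ->
  (forall x, 0 <= x -> g x <= h x) -> (intM f g <= intM f h)%E.
Proof.
move=> g_meas h_meas g_ge0 gh; apply: ge0_le_integral.
- exact: measurable_Rplus.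
- by move=> x; rewrite RplusE lee_fin => x_ge0; rewrite mulr_ge0 ?g_ge0 ?f_ge0.
- exact: measRp_EFin_f.
- exact: measRp_EFin_f.
- by move=> x; rewrite RplusE lee_fin => x_ge0; rewrite ler_wpM2r ?f_ge0 ?gh.
Qed.

Lemma intMD g h : measRp g -> measRp h -> (forall x, 0 <= x -> 0 <= g x) ->
  (forall x, 0 <= x -> 0 <= h x) ->
  intM f (fun x => g x + h x) = (intM f g + intM f h)%E.
Proof.
move=> g_meas h_meas g_ge0 h_ge0; rewrite /intM -ge0_integralD //.
- by apply: eq_integral => x _; rewrite mulrDl EFinD.
- exact: measurable_Rplus.
- by move=> x; rewrite RplusE lee_fin => x_ge0; rewrite mulr_ge0 ?g_ge0 ?f_ge0.
- exact: measRp_EFin_f.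
- by move=> x; rewrite RplusE lee_fin => x_ge0; rewrite mulr_ge0 ?h_ge0 ?f_ge0.
- exact: measRp_EFin_f.
Qed.

Lemma intMZl (k : R) g : 0 <= k -> measRp g -> (forall x, 0 <= x -> 0 <= g x) ->
  intM f (fun x => k * g x) = (k%:E * intM f g)%E.
Proof.
move=> k_ge0 g_meas g_ge0; rewrite /intM -ge0_integralZl_EFin //.
- by apply: eq_integral => x _; rewrite -EFinM mulrA.
- exact: measurable_Rplus.
- by move=> x; rewrite RplusE lee_fin => x_ge0; rewrite mulr_ge0 ?g_ge0 ?f_ge0.
- exact: measRp_EFin_f.
Qed.

Lemma intM_sum (I : Type) (s : seq I) (F : I -> R -> R) :
  (forall i, measRp (F i)) -> (forall i x, 0 <= x -> 0 <= F i x) ->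
  intM f (fun x => \sum_(i <- s) F i x) = (\sum_(i <- s) intM f (F i))%E.
Proof.
move=> F_meas F_ge0; rewrite /intM -ge0_integral_sum //.
- by apply: eq_integral => x _; rewrite mulr_suml sumEFin.
- exact: measurable_Rplus.
- by move=> i; exact: measRp_EFin_f.
- by move=> i x; rewrite RplusE lee_fin => x_ge0; rewrite mulr_ge0 ?F_ge0 ?f_ge0.
Qed.

End IntegralM.

Ltac measRp_tac := repeat first [ assumption | apply: measRp_cst | apply: measRp_id
  | apply: measRp_Vtau | apply: measRp_exp | apply: measRpX | apply: measRpB
  | apply: measRpD | apply: measRpM ].

Section Density.
Variable R : realType.
Variables (f : R -> R) (beta : R).
Hypothesis Hd : density_assumptions f beta.

Lemma density_measRp : measRp f.
Proof. by case: Hd => f_cont _; exact: continuous_measRp. Qed.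

Lemma density_ge0 x : 0 <= x -> 0 <= f x.
Proof.
case: Hd => f_cont [f_gt0 _] x_ge0.
have [->|x_neq0] := eqVneq x 0; last by apply/ltW/f_gt0; rewrite lt_def x_neq0.
have [_ f0] := (continuous_within_itvcyP 0 f).1 f_cont.
rewrite -(cvg_lim _ f0) //; apply: limr_ge; first by apply/cvg_ex; exists (f 0).
by near=> y; apply/ltW/f_gt0; near: y; exact: nbhs_right_gt.
Unshelve. all: end_near. Qed.

Lemma finM_expR l : l < beta -> finM f (fun x => expR (l * x)).
Proof. by case: Hd => _ [_ [_ [fin_beta _]]] /fin_beta. Qed.

Lemma finM_expR_lt_beta l : finM f (fun x => expR (l * x)) -> l < beta.
Proof. by case: Hd => _ [_ [_ [fin_beta _]]] /fin_beta. Qed.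

Lemma finM_dominated h (K l : R) : measRp h -> 0 <= K -> l < beta ->
  (forall x, 0 <= x -> 0 <= h x <= K * ((1 + x ^+ 2) * expR (l * x))) -> finM f h.
Proof.
move=> h_meas K_ge0 l_lt hK.
have f_meas := density_measRp; have f_ge0 := density_ge0.
have e_ge0 x : 0 <= x -> 0 <= expR (l * x) by rewrite expR_ge0.
have x2e_ge0 x : 0 <= x -> 0 <= x ^+ 2 * expR (l * x) by rewrite mulr_ge0 ?sqr_ge0.
have -> : finM f h = (intM f h < +oo)%E by [].
apply: (@le_lt_trans _ _ (intM f (fun x => K * (expR (l * x) + x ^+ 2 * expR (l * x))))).
  apply: le_intM => //; try by measRp_tac.
  - by move=> x /hK /andP[].
  - by move=> x /hK /andP[_]; rewrite mulrDl mul1r.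
rewrite intMZl //; try by measRp_tac.
  rewrite intMD //; try by measRp_tac.
  apply: lte_mul_pinfty => //; apply: lte_add_pinfty; first exact: finM_expR.
  by case: Hd => _ [_ [_ [_ [_ fin_sqr]]]]; apply/fin_sqr/finM_expR.
by move=> x x_ge0; rewrite addr_ge0 ?e_ge0 ?x2e_ge0.
Qed.

Lemma slope_lt_beta v (a S : R) : measRp v -> finM f (fun x => expR (v x)) ->
  (forall x, 0 <= x -> a + S * x <= v x) -> S < beta.
Proof.
move=> v_meas v_fin v_ge; apply: finM_expR_lt_beta.
have f_meas := density_measRp; have f_ge0 := density_ge0.
apply: (@le_lt_trans _ _ (intM f (fun x => expR (- a) * expR (v x)))).
  apply: le_intM => //; try by measRp_tac.
  by move=> x /v_ge vx; rewrite -expRD ler_expR; lra.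
rewrite intMZl ?expR_ge0 //; try by measRp_tac.
by apply: lte_mul_pinfty => //; rewrite lee_fin expR_ge0.
Qed.

Lemma Theta_V_decomposition_lt_beta v : inTheta v -> inV v -> finM f (fun x => expR (v x)) ->
  exists Q : seq R, [/\ {in Q, forall q, 0 <= q}, {in Q, forall q, 0 <= jump v q},
    forall x, 0 <= x -> v x = v 0 + \sum_(q <- Q) jump v q * Vtau q x &
    \sum_(q <- Q) jump v q < beta].
Proof.
move=> vT vV v_fin; have [Q [Q_ge0 J_ge0 vE]] := Theta_V_decomposition vT vV.
exists Q; split => //; apply: (@slope_lt_beta v (v 0 - \sum_(q <- Q) jump v q * q)) => //.
  exact: inV_measRp.
by move=> x x_ge0; rewrite (vE x x_ge0); have := Vtau_sum_ge x J_ge0; lra.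
Qed.

Lemma Theta1_growth th : inTheta1 f th -> inV th ->
  exists s, [/\ 0 <= s, s < beta & forall x, 0 <= x -> th x <= th 0 + s * x].
Proof.
move=> [thT th_int] thV.
have th_fin : finM f (fun x => expR (th x)) by rewrite /finM th_int ltry.
have [Q [Q_ge0 J_ge0 thE J_lt]] := Theta_V_decomposition_lt_beta thT thV th_fin.
exists (\sum_(q <- Q) jump th q); split => //.
- by rewrite big_seq sumr_ge0.
- by move=> x x_ge0; rewrite thE // lerD2l Vtau_sum_le.
Qed.

End Density.

Section Shrink.
Variable R : realType.
Implicit Types (v : R -> R) (t : R).

Definition shrink v t x := v x - t * (v x - v 0).

Lemma inTheta_shrink v t : inTheta v -> 0 <= t <= 1 -> inTheta (shrink v t).
Proof.
move=> [v_mono v_cvx] /andP[_ t_le1]; have t1_ge0 : 0 <= 1 - t by lra.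
rewrite /shrink; split => [x y x_ge0 xy|x y l x_ge0 y_ge0 l_ge0 l_le1].
  by have := v_mono x y x_ge0 xy; nra.
by have := v_cvx x y l x_ge0 y_ge0 l_ge0 l_le1; nra.
Qed.

Lemma Dbr_shrink s v t : pwlinear s v -> Dbr (shrink v t) `<=` Dbr v.
Proof.
move=> vL tau [tau_ge0 w_kink]; split => //; apply: contra_neq w_kink => v_smooth.
have [d [d_gt0 dt ds]] := isolating_radius s tau_ge0.
have [vR vL'] := pwlinear_affine_near vL tau_ge0 d_gt0 dt ds.
have wA a b : affine_on a b v -> affine_on a b (shrink v t).
  by move=> vA y ay yb; rewrite /shrink (vA y ay yb); ring.
have shrinkB x y : shrink v t x - shrink v t y = (1 - t) * (v x - v y).
  by rewrite /shrink; ring.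
rewrite (rderiv_affine_on d_gt0 (wA _ _ vR)) shrinkB -mulrA.
have [tau0|tau_neq0] := eqVneq tau 0.
  rewrite tau0 in vR v_smooth *.
  by move: v_smooth; rewrite !lderiv0 (rderiv_affine_on d_gt0 vR) => <-; rewrite mulr0.
have tau_gt0 : 0 < tau by rewrite lt_def tau_neq0.
rewrite (lderiv_affine_on tau_neq0 d_gt0 (wA _ _ (vL' tau_gt0))) shrinkB -mulrA.
move: v_smooth; rewrite (lderiv_affine_on tau_neq0 d_gt0 (vL' tau_gt0)).
by rewrite (rderiv_affine_on d_gt0 vR) => ->.
Qed.

Lemma inVS_shrink v t : inV v -> inVS (Dbr v) (shrink v t).
Proof.
move=> [v_cont [s vL]]; split; last exact: Dbr_shrink vL.
split; last first.
  by exists s => a b a_ge0 ab sab y ay yb; rewrite /shrink (vL a b a_ge0 ab sab y ay yb); ring.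
apply/subspace_continuousP => x x_ge0; rewrite /shrink.
apply: cvgB; first exact: (subspace_continuousP _ _).1 v_cont x x_ge0.
apply: cvgM; first exact: cvg_cst.
apply: cvgB; [exact: (subspace_continuousP _ _).1 v_cont x x_ge0|exact: cvg_cst].
Qed.

End Shrink.

Section Empirical.
Variable R : realType.
Implicit Types (xs : seq R) (g h : R -> R).

Definition avg xs g := (\sum_(x <- xs) g x) / (size xs)%:R.

Lemma avgD xs g h : avg xs (fun x => g x + h x) = avg xs g + avg xs h.
Proof. by rewrite /avg big_split mulrDl. Qed.

Lemma avgB xs g h : avg xs (fun x => g x - h x) = avg xs g - avg xs h.
Proof. by rewrite /avg sumrB mulrBl. Qed.

Lemma avgZ xs g (a : R) : avg xs (fun x => a * g x) = a * avg xs g.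
Proof. by rewrite /avg -mulr_sumr mulrA. Qed.

Lemma avg_shrink xs v t : avg xs (shrink v t) = avg xs v - t * avg xs (fun x => v x - v 0).
Proof. by rewrite /shrink avgB avgZ. Qed.

Lemma avg_cst xs (c : R) : (0 < size xs)%N -> avg xs (fun _ => c) = c.
Proof.
move=> xs_gt0; rewrite /avg big_const_seq count_predT iter_addr addr0.
by rewrite -[c *+ _]mulr_natr mulfK // pnatr_eq0 -lt0n.
Qed.

Lemma avg_sum xs (I : Type) (s : seq I) (c : I -> R) (G : I -> R -> R) :
  avg xs (fun x => \sum_(i <- s) c i * G i x) = \sum_(i <- s) c i * avg xs (G i).
Proof.
rewrite /avg exchange_big mulr_suml; apply: eq_bigr => i _.
by rewrite -mulr_sumr mulrA.
Qed.

Lemma eq_avg xs g h : all (fun x => 0 <= x) xs ->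
  (forall x, 0 <= x -> g x = h x) -> avg xs g = avg xs h.
Proof.
by move=> /allP xs_ge0 gh; rewrite /avg; congr (_ / _); apply: eq_big_seq => x /xs_ge0 /gh.
Qed.

Lemma avg_Vtau_sum xs (v : R -> R) a Q (c : R -> R) : (0 < size xs)%N ->
  all (fun x => 0 <= x) xs ->
  (forall x, 0 <= x -> v x = a + \sum_(q <- Q) c q * Vtau q x) ->
  avg xs v = a + \sum_(q <- Q) c q * avg xs (Vtau q).
Proof.
move=> xs_gt0 xs_ge0 vE; rewrite (eq_avg xs_ge0 vE).
by rewrite avgD avg_cst // avg_sum.
Qed.

Lemma ler_sum_shift (Q : seq R) (c a b : R -> R) e : {in Q, forall q, 0 <= c q} ->
  {in Q, forall q, a q <= b q + e} ->
  \sum_(q <- Q) c q * a q <= \sum_(q <- Q) c q * b q + e * \sum_(q <- Q) c q.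
Proof.
move=> c_ge0 ab; rewrite mulr_sumr -big_split /= !big_seq; apply: ler_sum => q qQ.
by rewrite [e * _]mulrC -mulrDr ler_wpM2l ?c_ge0 ?ab.
Qed.

Lemma last_ge0 (xs : seq R) : all (fun x => 0 <= x) xs -> 0 <= last 0 xs.
Proof. by move=> /allP xs_ge0; have := mem_last 0 xs; rewrite inE => /predU1P[->|/xs_ge0]. Qed.

Lemma LikE f xs g : Lik f xs g = ((avg xs g)%:E - intM f (fun x => expR (g x)) + 1)%E.
Proof. by []. Qed.

Lemma Lik_Theta1 f xs g : intM f (fun x => expR (g x)) = 1%:E -> Lik f xs g = (avg xs g)%:E.
Proof. by rewrite LikE => ->; rewrite -EFinB -EFinD subrK. Qed.

End Empirical.

Section ExpBounds.
Variable R : realType.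
Implicit Types z : R.

Lemma expR_sub_le z : 0 <= z -> expR z - 1 - z <= z ^+ 2 * expR z.
Proof.
move=> z_ge0; have := expR_ge1Dx (- z); rewrite expRN.
have ez_gt0 := expR_gt0 z; move=> /(ler_wpM2l (ltW ez_gt0)); rewrite mulfV ?gt_eqF //.
by move=> h; rewrite expr2; nra.
Qed.

Lemma expRN_le z : 0 <= z -> expR (- z) <= 1 - z + z ^+ 2.
Proof.
move=> z_ge0; have := expR_ge1Dx z; rewrite -[expR z]invrK -expRN.
have ez_gt0 := expR_gt0 (- z); move=> /(ler_wpM2l (ltW ez_gt0)); rewrite mulfV ?gt_eqF //.
by move=> h; rewrite expr2; nra.
Qed.

End ExpBounds.

(* [fine] maps an infinite integral to [0]; finiteness is proved separately. *)
Definition expect_theta (R : realType) (f th g : R -> R) :=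
  fine (intM f (fun x => g x * expR (th x))).

Section Tilted.
Variable R : realType.
Variables (f : R -> R) (beta : R) (th : R -> R) (s : R).
Hypotheses (Hd : density_assumptions f beta) (th_meas : measRp th)
  (th_int : intM f (fun x => expR (th x)) = 1%:E) (s_lt : s < beta)
  (th_growth : forall x, 0 <= x -> th x <= th 0 + s * x).

Let f_meas := density_measRp Hd.
Let f_ge0 := density_ge0 Hd.
Local Notation E := (expect_theta f th).

Lemma finM_tilted g K l : measRp g -> 0 <= K -> s + l < beta ->
  (forall x, 0 <= x -> 0 <= g x <= K * ((1 + x ^+ 2) * expR (l * x))) ->
  finM f (fun x => g x * expR (th x)).
Proof.
move=> g_meas K_ge0 sl_lt gK.
apply: (finM_dominated Hd (K := K * expR (th 0)) (l := s + l)) => //.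
- by measRp_tac.
- by rewrite mulr_ge0 ?expR_ge0.
move=> x x_ge0; have /andP[g_ge0 g_le] := gK x x_ge0.
rewrite mulr_ge0 ?expR_ge0 //=.
have e_le : expR (th x) <= expR (th 0) * expR (s * x) by rewrite -expRD ler_expR th_growth.
apply: (le_trans (ler_pM g_ge0 (expR_ge0 _) g_le e_le)).
suff -> : K * ((1 + x ^+ 2) * expR (l * x)) * (expR (th 0) * expR (s * x)) =
  K * expR (th 0) * ((1 + x ^+ 2) * expR ((s + l) * x)) by [].
by rewrite (mulrDl s l x) expRD; ring.
Qed.

Lemma intM_tilted g : (forall x, 0 <= x -> 0 <= g x) ->
  finM f (fun x => g x * expR (th x)) -> intM f (fun x => g x * expR (th x)) = (E g)%:E.
Proof.
move=> g_ge0; apply: intM_EFin; apply: intM_ge0 => // x x_ge0.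
by rewrite mulr_ge0 ?g_ge0 ?expR_ge0.
Qed.

Lemma expect_theta_ge0 g : (forall x, 0 <= x -> 0 <= g x) -> 0 <= E g.
Proof.
move=> g_ge0; apply: fine_ge0; apply: intM_ge0 => // x x_ge0.
by rewrite mulr_ge0 ?g_ge0 ?expR_ge0.
Qed.

Section Sublinear.
Variable v : R -> R.
Hypotheses (v_meas : measRp v) (v_bnd : forall x, 0 <= x -> 0 <= v x <= x).

Let v_ge0 x : 0 <= x -> 0 <= v x.
Proof. by move=> /v_bnd /andP[]. Qed.

(* Half of the margin [beta - s] is left for the second-order remainder. *)
Local Notation t0 := ((s + beta) / 2 - s).

Let t0_gt0 : 0 < t0. Proof. by rewrite subr_gt0 (midf_lt s_lt).1. Qed.

Let v2 x := v x ^+ 2 * expR (t0 * v x).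

Lemma finM_tilted_sublinear : finM f (fun x => v x * expR (th x)).
Proof.
apply: (finM_tilted (K := 1) (l := 0)) => //; first by rewrite addr0.
move=> x x_ge0; have /andP[v0 vx] := v_bnd x_ge0.
rewrite v0 mul0r expR0 !mul1r /=; apply: (le_trans vx).
by rewrite expr2; nra.
Qed.

Let v2_fin : finM f (fun x => v2 x * expR (th x)).
Proof.
have st0_lt : s + t0 < beta by rewrite subrKC (midf_lt s_lt).2.
apply: (finM_tilted (K := 1) (l := t0)); rewrite /v2 //; try by measRp_tac.
move=> x x_ge0; have /andP[v0 vx] := v_bnd x_ge0.
rewrite mulr_ge0 ?sqr_ge0 ?expR_ge0 //= mul1r.
apply: ler_pM; rewrite ?sqr_ge0 ?expR_ge0 //.
  by rewrite (le_trans (ler_pM v0 v0 vx vx)) // -expr2 lerDr.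
by rewrite ler_expR ler_wpM2l // ltW.
Qed.

Lemma intM_exp_tilt t : 0 < t <= t0 -> exists2 rho, 0 <= rho <= t ^+ 2 * E v2 &
  intM f (fun x => expR (th x + t * v x)) = (1 + t * E v + rho)%:E.
Proof.
move=> /andP[t_gt0 t_le]; have v_fin := finM_tilted_sublinear.
pose r x := expR (th x + t * v x) - expR (th x) * (1 + t * v x).
have r_meas : measRp r by rewrite /r; measRp_tac.
have r_ge0 x : 0 <= x -> 0 <= r x.
  by move=> x_ge0; rewrite /r subr_ge0 expRD ler_wpM2l ?expR_ge0 ?expR_ge1Dx.
have r_le x : 0 <= x -> r x <= t ^+ 2 * (v2 x * expR (th x)).
  move=> x_ge0; have tv_ge0 : 0 <= t * v x by rewrite mulr_ge0 ?v_ge0 // ltW.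
  have : expR (t * v x) - 1 - t * v x <= (t * v x) ^+ 2 * expR (t0 * v x).
    apply: (le_trans (expR_sub_le tv_ge0)); rewrite ler_wpM2l ?sqr_ge0 // ler_expR.
    by rewrite ler_wpM2r ?v_ge0.
  have e_gt0 := expR_gt0 (th x); rewrite /r /v2 expRD => h.
  have := ler_wpM2l (ltW e_gt0) h; lra.
have r_int : (intM f r <= (t ^+ 2 * E v2)%:E)%E.
  rewrite EFinM -intM_tilted //; last by move=> x _; rewrite /v2 mulr_ge0 ?sqr_ge0 ?expR_ge0.
  rewrite -intMZl ?sqr_ge0 //.
  - by apply: (le_intM f_meas f_ge0) => //; rewrite /v2; measRp_tac.
  - by rewrite /v2; measRp_tac.
  - by move=> x x_ge0; rewrite /v2 !mulr_ge0 ?expR_ge0 ?v_ge0.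
have r_fin : finM f r by apply: le_lt_trans r_int _; exact: ltry.
exists (fine (intM f r)).
  by rewrite fine_ge0 ?intM_ge0 //= -lee_fin -intM_EFin ?intM_ge0.
rewrite (@eq_intM _ f _ (fun x => expR (th x) + t * (v x * expR (th x)) + r x)); last first.
  by move=> x _; rewrite /r; ring.
clearbody r; rewrite !intMD ?intMZl ?th_int //; try by measRp_tac.
- by rewrite intM_tilted // {1}(intM_EFin _ r_fin) ?intM_ge0 // -EFinM -!EFinD.
- exact: ltW.
all: by move=> x x_ge0; rewrite ?addr_ge0 ?mulr_ge0 ?expR_ge0 ?v_ge0 // ltW.
Qed.

Lemma DL_sublinearE xs : DL f xs th v = (avg xs v - E v)%:E.
Proof.
have m2_ge0 : 0 <= E v2.
  by apply: expect_theta_ge0 => x _; rewrite /v2 mulr_ge0 ?sqr_ge0 ?expR_ge0.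
pose G (t : R) := ((Lik f xs (fun x => (th x + t * v x)%R) - Lik f xs th) * (t^-1)%:E)%E.
have GE t : 0 < t <= t0 ->
    exists2 rho, 0 <= rho <= t ^+ 2 * E v2 & G t = (avg xs v - E v - rho / t)%:E.
  move=> /[dup] t_range /andP[t_gt0 _]; have [rho rho_bnd intE] := intM_exp_tilt t_range.
  exists rho => //; rewrite /G LikE avgD avgZ intE (Lik_Theta1 _ th_int).
  rewrite -[LHS]/(((avg xs th + t * avg xs v) - (1 + t * E v + rho) + 1 - avg xs th) * t^-1)%:E.
  congr EFin; field; exact: lt0r_neq0.
apply: cvg_lim => //; apply/fine_cvgP; split.
  near=> t; rewrite -/(G t); have [|rho _ ->] // := GE t.
  apply/andP; split; near: t; [exact: nbhs_right_gt|exact: nbhs_right_le].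
apply/cvgrPdist_lt => e e_gt0; near=> t.
have t_gt0 : 0 < t by near: t; exact: nbhs_right_gt.
have t_le : t <= t0 by near: t; exact: nbhs_right_le.
have te : t * (E v2 + 1) < e.
  rewrite -ltr_pdivlMr ?ltr_wpDl //; near: t; apply: nbhs_right_lt.
  by rewrite divr_gt0 ?ltr_wpDl.
rewrite /= -/(G t); have [|rho /andP[rho_ge0 rho_le] ->] := GE t; first by rewrite t_gt0.
rewrite /= opprB addrC subrK ger0_norm; last by rewrite divr_ge0 // ltW.
by rewrite ltr_pdivrMr //; rewrite expr2 in rho_le; nra.
Unshelve. all: end_near. Qed.

End Sublinear.

Lemma DL_VtauE xs q : 0 <= q -> DL f xs th (Vtau q) = (avg xs (Vtau q) - E (Vtau q))%:E.
Proof.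
move=> q_ge0; apply: DL_sublinearE; first exact: measRp_Vtau.
by move=> x x_ge0; rewrite Vtau_ge0 Vtau_le_id.
Qed.

Lemma intM_tilted_Vtau_sum Q (c : R -> R) :
  {in Q, forall q, 0 <= q} -> {in Q, forall q, 0 <= c q} ->
  intM f (fun x => (\sum_(q <- Q) c q * Vtau q x) * expR (th x)) =
  (\sum_(q <- Q) c q * E (Vtau q))%:E.
Proof.
move=> Q_ge0 c_ge0; pose F q x := if q \in Q then c q * (Vtau q x * expR (th x)) else 0.
rewrite (@eq_intM _ f _ (fun x => \sum_(q <- Q) F q x)); last first.
  by move=> x _; rewrite mulr_suml; apply: eq_big_seq => q qQ; rewrite /F qQ mulrA.
rewrite intM_sum //; first last.
- move=> q x x_ge0; rewrite /F; case: ifP => // qQ.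
  by rewrite !mulr_ge0 ?c_ge0 ?Vtau_ge0 ?expR_ge0.
- by move=> q; rewrite /F; case: (q \in Q); measRp_tac.
rewrite -sumEFin; apply: eq_big_seq => q qQ; rewrite /F qQ intMZl ?c_ge0 //; try by measRp_tac.
- rewrite intM_tilted // => [x _|]; first exact: Vtau_ge0.
  apply: finM_tilted_sublinear; first exact: measRp_Vtau.
  by move=> x x_ge0; rewrite Vtau_ge0 Vtau_le_id //; exact: Q_ge0.
- by move=> x _; rewrite mulr_ge0 ?Vtau_ge0 ?expR_ge0.
Qed.

Section Centered.
Hypotheses (s_ge0 : 0 <= s) (th_mono : forall x, 0 <= x -> th 0 <= th x).

Local Notation u := (fun x => th x - th 0).

Let u_ge0 x : 0 <= x -> 0 <= u x.
Proof. by move=> /th_mono; rewrite subr_ge0. Qed.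

Let u_le x : 0 <= x -> u x <= s * x.
Proof. by move=> x_ge0; have thx : th x <= th 0 + s * x := th_growth x_ge0; lra. Qed.

Let u_fin : finM f (fun x => u x * expR (th x)).
Proof.
apply: (finM_tilted (K := s) (l := 0)); rewrite ?addr0 //; first by measRp_tac.
move=> x x_ge0; rewrite u_ge0 // mul0r expR0 mulr1 (le_trans (u_le x_ge0)) //.
by rewrite ler_wpM2l // expr2; nra.
Qed.

Let u2_fin : finM f (fun x => u x ^+ 2 * expR (th x)).
Proof.
apply: (finM_tilted (K := s ^+ 2) (l := 0)); rewrite ?addr0 ?sqr_ge0 //; first by measRp_tac.
move=> x x_ge0; rewrite sqr_ge0 mul0r expR0 mulr1 /=.
have u_sq : u x ^+ 2 <= (s * x) ^+ 2.
  by rewrite !expr2; apply: ler_pM; rewrite ?u_ge0 ?u_le.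
by rewrite (le_trans u_sq) // exprMn ler_wpM2l ?sqr_ge0 // lerDr.
Qed.

Lemma intM_exp_shrink t : 0 <= t ->
  (intM f (fun x => expR (shrink th t x)) + (t * E u)%:E <=
   (1 + t ^+ 2 * E (fun x => u x ^+ 2))%:E)%E.
Proof.
move=> t_ge0; rewrite EFinD EFinM -th_int EFinM -!intM_tilted ?sqr_ge0 //.
rewrite -!intMZl ?sqr_ge0 //; try by measRp_tac.
rewrite -!intMD; try by measRp_tac.
- apply: (le_intM f_meas f_ge0); try by measRp_tac.
    by move=> x x_ge0; rewrite addr_ge0 ?expR_ge0 // !mulr_ge0 ?expR_ge0 ?u_ge0.
  move=> x x_ge0; rewrite /shrink expRD mulrC.
  have tu_ge0 : 0 <= t * u x by rewrite mulr_ge0 ?u_ge0.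
  have := ler_wpM2r (expR_ge0 (th x)) (expRN_le tu_ge0); rewrite -mulNr.
  by rewrite expr2; nra.
all: by move=> x x_ge0; rewrite ?mulr_ge0 ?expR_ge0 ?sqr_ge0 ?u_ge0.
Qed.

Lemma locally_optimal_expect_le xs : inV th -> locally_optimal f xs th ->
  E u <= avg xs u.
Proof.
move=> thV [thT [_ th_opt]].
have u2_ge0 : 0 <= E (fun x => u x ^+ 2) by apply: expect_theta_ge0 => x _; exact: sqr_ge0.
have key t : 0 < t < 1 -> E u - avg xs u <= t * E (fun x => u x ^+ 2).
  move=> /andP[t_gt0 t_lt1]; have t01 : 0 <= t <= 1 by rewrite !ltW.
  have := th_opt _ (inTheta_shrink thT t01) (inVS_shrink t thV).
  rewrite (Lik_Theta1 _ th_int) LikE avg_shrink; have := intM_exp_shrink (ltW t_gt0).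
  set W := intM f _ => W_le L_le.
  have W_ge0 : (0 <= W)%E by apply: intM_ge0 => // x _; exact: expR_ge0.
  have W_fin : (W < +oo)%E.
    apply: le_lt_trans (ltry (1 + t ^+ 2 * E (fun x => u x ^+ 2))); apply: le_trans W_le.
    by rewrite leeDl // lee_fin mulr_ge0 ?(ltW t_gt0) ?expect_theta_ge0.
  have WE : W = (fine W)%:E := intM_EFin W_ge0 W_fin.
  rewrite WE in W_le L_le.
  have W_le' : fine W + t * E u <= 1 + t ^+ 2 * E (fun x => u x ^+ 2) by rewrite -lee_fin.
  have L_le' : avg xs th - t * avg xs u - fine W + 1 <= avg xs th by rewrite -lee_fin.
  rewrite -(ler_pM2l t_gt0) mulrA -expr2; nra.
apply/ler_addgt0Pr => e e_gt0.
have m2_gt0 : 0 < E (fun x => u x ^+ 2) + 1 by lra.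
pose t := Num.min (1 / 2) (e / (E (fun x => u x ^+ 2) + 1)).
have t_le : t <= e / (E (fun x => u x ^+ 2) + 1) by rewrite ge_min lexx orbT.
have t_le_half : t <= 1 / 2 by rewrite ge_min lexx.
have t_gt0 : 0 < t by rewrite lt_min !divr_gt0.
clearbody t; have t_lt1 : t < 1 by lra.
have := key t; rewrite t_gt0 t_lt1 => /(_ isT).
rewrite ler_pdivlMr // in t_le; nra.
Qed.

(* Gibbs' inequality [int (thhat - th) e^th dM <= int e^thhat dM - int e^th dM]
   for [thhat = a + g], with all integrands made nonnegative by adding [|1 + a - th 0|]. *)
Lemma gibbs_tilted (a : R) g : measRp g -> (forall x, 0 <= x -> 0 <= g x) ->
  (intM f (fun x => expR (a + g x)%R) <= 1%:E)%E ->
  ((a - th 0)%:E + intM f (fun x => (g x * expR (th x))%R) <= (E u)%:E)%E.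
Proof.
move=> g_meas g_ge0 int_le1; pose m := 1 + a - th 0; pose C := `|m|.
have C_ge0 : 0 <= C := normr_ge0 m.
have Cm_ge0 : 0 <= C + m by have := ler_norm (- m); rewrite normrN /C; lra.
have int_le : (intM f (fun x => (C + m) * expR (th x) + g x * expR (th x))%R <=
    intM f (fun x => expR (a + g x) + C * expR (th x) + u x * expR (th x))%R)%E.
  apply: (le_intM f_meas f_ge0); try by measRp_tac.
    by move=> x x_ge0; rewrite addr_ge0 ?mulr_ge0 ?expR_ge0 ?g_ge0.
  move=> x _; have := ler_wpM2r (expR_ge0 (th x)) (expR_ge1Dx (a + g x - th x)).
  by rewrite -expRD subrK /m; nra.
rewrite !intMD ?intMZl ?th_int ?(intM_tilted u_ge0) // in int_le; try by measRp_tac.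
- rewrite !mule1 in int_le; set G := intM f _ in int_le *.
  have G_ge0 : (0 <= G)%E.
    by apply: intM_ge0 => // x x_ge0; apply: mulr_ge0; [exact: g_ge0|exact: expR_ge0].
  have := le_trans int_le (leeD2r _ (leeD2r _ int_le1)); rewrite -!EFinD => bound.
  have G_fin : (G < +oo)%E.
    by apply: le_lt_trans (ltry _); apply: le_trans bound; rewrite leeDr // lee_fin.
  have GE : G = (fine G)%:E := intM_EFin G_ge0 G_fin.
  rewrite GE -EFinD lee_fin; rewrite GE -EFinD lee_fin /m in bound; lra.
all: by move=> x x_ge0; rewrite ?addr_ge0 ?mulr_ge0 ?expR_ge0 ?g_ge0 ?u_ge0.
Qed.

Lemma Lik_gap_le xs thhat Q eps : (0 < size xs)%N -> all (fun x => 0 <= x) xs ->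
  inV th -> locally_optimal f xs th -> intM f (fun x => expR (thhat x)) = 1%:E ->
  {in Q, forall q, 0 <= q} -> {in Q, forall q, 0 <= jump thhat q} ->
  (forall x, 0 <= x -> thhat x = thhat 0 + \sum_(q <- Q) jump thhat q * Vtau q x) ->
  {in Q, forall q, (DL f xs th (Vtau q) < eps%:E)%E} ->
  (Lik f xs thhat - Lik f xs th <= ((\sum_(q <- Q) jump thhat q) * eps)%:E)%E.
Proof.
move=> xs_gt0 xs_ge0 thV th_opt thhat_int Q_ge0 J_ge0 thhatE DL_lt.
have V_le q : q \in Q -> avg xs (Vtau q) <= E (Vtau q) + eps.
  by move=> qQ; rewrite -lerBlDl -lee_fin -DL_VtauE ?Q_ge0 // ltW ?DL_lt.
have gibbs : thhat 0 - th 0 + \sum_(q <- Q) jump thhat q * E (Vtau q) <= E u.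
  rewrite -lee_fin EFinD -intM_tilted_Vtau_sum //; apply: gibbs_tilted.
  - by apply: measRp_sum => q; measRp_tac.
  - by move=> x _; rewrite big_seq sumr_ge0 // => q qQ; rewrite mulr_ge0 ?J_ge0 ?Vtau_ge0.
  - by rewrite (@eq_intM _ f _ (fun x => expR (thhat x))) ?thhat_int // => x /thhatE ->.
have avg_th : avg xs th = th 0 + avg xs u by rewrite avgB avg_cst // addrC subrK.
have := locally_optimal_expect_le thV th_opt; have := ler_sum_shift J_ge0 V_le.
rewrite !Lik_Theta1 // -EFinB lee_fin (avg_Vtau_sum _ _ thhatE) // avg_th; lra.
Qed.

End Centered.

End Tilted.

Theorem mainTheorem3 (R : realType) (f : R -> R) (beta : R) (xs : seq R)
    (thhat th : R -> R) (eps : R) :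
  density_assumptions f beta ->
  (0 < size xs)%N -> sorted <=%R xs -> all (fun x => 0 <= x) xs ->
  (* thhat is the maximizer of L over Theta *)
  inTheta thhat -> (forall v, inTheta v -> (Lik f xs v <= Lik f xs thhat)%E) ->
  (* known facts about thhat (Duembgen) *)
  inTheta1 f thhat -> inV thhat ->
  Dbr thhat `<=` ([set 0] `|` `[head 0 xs, last 0 xs]) `\` [set x | x \in xs] ->
  0 < eps ->
  inTheta1 f th -> inV th -> locally_optimal f xs th ->
  (ereal_sup [set DL f xs th (Vtau tau) | tau in @Rplus R] < eps%:E)%E ->
  (Lik f xs thhat - Lik f xs th <= (rderiv thhat (last 0 xs) * eps)%R%:E)%E /\
  rderiv thhat (last 0 xs) * eps < beta * eps.
Proof.
move=> Hd xs_gt0 _ xs_ge0 thhatT _ [_ thhat_int] thhatV Dbr_thhat eps_gt0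
  [thT th_int] thV th_opt DL_lt.
have thhat_fin : finM f (fun x => expR (thhat x)) by rewrite /finM thhat_int ltry.
have [Q [Q_ge0 J_ge0 thhatE J_lt]] :=
  Theta_V_decomposition_lt_beta Hd thhatT thhatV thhat_fin.
have slope_last : rderiv thhat (last 0 xs) = \sum_(q <- Q) jump thhat q.
  apply: (rderiv_eq_sum_jump _ thhatE) => [|q last_q /Dbr_thhat [[/= q0|]]].
  - exact: last_ge0.
  - by have := last_ge0 xs_ge0; lra.
  - by rewrite /= in_itv /= => /andP[_]; lra.
split; last by rewrite slope_last ltr_pM2r.
have [s [s_ge0 s_lt th_growth]] := Theta1_growth Hd (conj thT th_int) thV.
have th_mono x : 0 <= x -> th 0 <= th x by move=> x_ge0; apply: thT.1.
rewrite slope_last; apply: (Lik_gap_le Hd (inV_measRp thV) th_int s_lt th_growth s_ge0 th_mono)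
  => // q qQ.
by apply: le_lt_trans DL_lt; apply: ereal_sup_ubound; exists q; rewrite ?RplusE ?Q_ge0.
Qed.
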